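(* Let $n\ge0$ and $x,y,z\in Q_n$. Then $[x,y,z]=[z,y,x]$.
   Context: Cayley--Dickson loops: $Q_0=\{1,-1\}\subset\mathbb{R}$ with conjugation $x^*=x$. For $n\ge1$, $Q_n=\{(x,0),(x,1)\mid x\in Q_{n-1}\}$ with multiplication $(x,0)(y,0)=(xy,0)$, $(x,0)(y,1)=(yx,1)$, $(x,1)(y,0)=(xy^*,1)$, $(x,1)(y,1)=(-y^*x,0)$ and conjugation $(x,0)^*=(x^*,0)$, $(x,1)^*=(-x,1)$, where $-(x,a)=(-x,a)$. $Q_n$ is a loop with neutral element $1=(1,0,\dots,0)$; $-1=(-1,0,\dots,0)$ commutes and associates with all elements and $-x=(-1)x$. The associator $[x,y,z]$ is defined by $(xy)z=(x(yz))[x,y,z]$; it always lies in $\{1,-1\}$. *)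

(* Cayley--Dickson loops Q_n.
   Q_0 = {1,-1} is encoded by bool: false = 1, true = -1.
   Q_(n+1) = Q_n * bool, where (x,false) = (x,0) and (x,true) = (x,1). *)

Fixpoint Q (n : nat) : Type :=
  match n with
  | O => bool
  | S m => (Q m * bool)%type
  end.

Fixpoint Qneg (n : nat) : Q n -> Q n :=
  match n return Q n -> Q n with
  | O => fun x => negb x
  | S m => fun p => (Qneg m (fst p), snd p)
  end.

Fixpoint Qconj (n : nat) : Q n -> Q n :=
  match n return Q n -> Q n with
  | O => fun x => x
  | S m => fun p =>
      if snd p then (Qneg m (fst p), true) else (Qconj m (fst p), false)
  end.

Fixpoint Qmul (n : nat) : Q n -> Q n -> Q n :=
  match n return Q n -> Q n -> Q n with
  | O => fun x y => xorb x y
  | S m => fun p q =>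
      let x := fst p in let y := fst q in
      match snd p, snd q with
      | false, false => (Qmul m x y, false)
      | false, true  => (Qmul m y x, true)
      | true,  false => (Qmul m x (Qconj m y), true)
      | true,  true  => (Qneg m (Qmul m (Qconj m y) x), false)
      end
  end.

Fixpoint Qone (n : nat) : Q n :=
  match n return Q n with
  | O => false
  | S m => (Qone m, false)
  end.

Definition Qmone (n : nat) : Q n := Qneg n (Qone n).

Definition beq (a b : bool) : bool := if a then b else negb b.

Fixpoint Qeqb (n : nat) : Q n -> Q n -> bool :=
  match n return Q n -> Q n -> bool with
  | O => fun x y => beq x y
  | S m => fun p q => andb (Qeqb m (fst p) (fst q)) (beq (snd p) (snd q))
  end.

(* The associator [x,y,z] is defined by (xy)z = (x(yz))[x,y,z] and always
   lies in {1,-1}; hence it is 1 exactly when (xy)z = x(yz), and -1 otherwise. *)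
Definition Qassoc (n : nat) (x y z : Q n) : Q n :=
  if Qeqb n (Qmul n (Qmul n x y) z) (Qmul n x (Qmul n y z))
  then Qone n else Qmone n.

From Stdlib Require Import Setoid Bool.

(* Conjugation is an anti-automorphism, so (xy)z = x(yz) is equivalent to
   the associativity of the triple (conj z, conj y, conj x). Every conjugate
   is x or -x, and -1 is central, so the signs cancel and this is the
   associativity of (z, y, x). *)

Lemma Qneg_involutive n (x : Q n) : Qneg n (Qneg n x) = x.
Proof. induction n as [|n IHn]; simpl; [now destruct x | destruct x; simpl; now rewrite IHn]. Qed.

Lemma Qneg_inj n (x y : Q n) : Qneg n x = Qneg n y -> x = y.
Proof. intro H; now rewrite <- (Qneg_involutive n x), H, Qneg_involutive. Qed.

Lemma Qconj_neg n (x : Q n) : Qconj n (Qneg n x) = Qneg n (Qconj n x).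
Proof. induction n as [|n IHn]; simpl; [reflexivity | destruct x as [x []]; simpl; now rewrite ?IHn]. Qed.

Lemma Qconj_involutive n (x : Q n) : Qconj n (Qconj n x) = x.
Proof.
  induction n as [|n IHn]; simpl; [reflexivity|].
  destruct x as [x []]; simpl; now rewrite ?IHn, ?Qneg_involutive.
Qed.

Lemma Qconj_inj n (x y : Q n) : Qconj n x = Qconj n y -> x = y.
Proof. intro H; now rewrite <- (Qconj_involutive n x), H, Qconj_involutive. Qed.

Lemma Qconj_sign n (x : Q n) : Qconj n x = x \/ Qconj n x = Qneg n x.
Proof.
  induction n as [|n IHn]; simpl; [now left|].
  destruct x as [x []]; simpl; [now right|].
  destruct (IHn x) as [-> | ->]; auto.
Qed.

(* Both sign rules are needed one level down for each of them. *)
Lemma Qmul_neg n (x y : Q n) :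
  Qmul n (Qneg n x) y = Qneg n (Qmul n x y) /\ Qmul n x (Qneg n y) = Qneg n (Qmul n x y).
Proof.
  revert x y; induction n as [|n IHn]; simpl; [now intros [] []|].
  intros [x []] [y []]; simpl; split;
    rewrite ?Qconj_neg, ?(proj1 (IHn _ _)), ?(proj2 (IHn _ _)); reflexivity.
Qed.

Lemma Qmul_negl n (x y : Q n) : Qmul n (Qneg n x) y = Qneg n (Qmul n x y).
Proof. apply Qmul_neg. Qed.

Lemma Qmul_negr n (x y : Q n) : Qmul n x (Qneg n y) = Qneg n (Qmul n x y).
Proof. apply Qmul_neg. Qed.

Lemma Qconj_mul n (x y : Q n) : Qconj n (Qmul n x y) = Qmul n (Qconj n y) (Qconj n x).
Proof.
  revert x y; induction n as [|n IHn]; simpl; [now intros [] []|].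
  intros [x []] [y []]; simpl;
    now rewrite ?Qconj_neg, ?IHn, ?Qconj_involutive, ?Qmul_negl, ?Qmul_negr, ?Qneg_involutive.
Qed.

Lemma Qeqb_spec n (x y : Q n) : Qeqb n x y = true <-> x = y.
Proof.
  revert x y; induction n as [|n IHn]; simpl.
  - intros [] []; simpl; split; congruence.
  - intros [x a] [y b]; simpl.
    rewrite andb_true_iff, IHn.
    assert (beq a b = true <-> a = b) as -> by (destruct a, b; simpl; split; congruence).
    split; [now intros [-> ->] | now intros [= -> ->]].
Qed.

Definition associates n (x y z : Q n) : Prop :=
  Qmul n (Qmul n x y) z = Qmul n x (Qmul n y z).

Lemma associates_negl n (x y z : Q n) : associates n (Qneg n x) y z <-> associates n x y z.
Proof.
  unfold associates; rewrite !Qmul_negl.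
  split; [apply Qneg_inj | congruence].
Qed.

Lemma associates_negm n (x y z : Q n) : associates n x (Qneg n y) z <-> associates n x y z.
Proof.
  unfold associates; rewrite Qmul_negr, Qmul_negl, Qmul_negl, Qmul_negr.
  split; [apply Qneg_inj | congruence].
Qed.

Lemma associates_negr n (x y z : Q n) : associates n x y (Qneg n z) <-> associates n x y z.
Proof.
  unfold associates; rewrite !Qmul_negr.
  split; [apply Qneg_inj | congruence].
Qed.

Lemma associates_conj n (x y z : Q n) :
  associates n (Qconj n x) (Qconj n y) (Qconj n z) <-> associates n x y z.
Proof.
  destruct (Qconj_sign n x) as [-> | ->], (Qconj_sign n y) as [-> | ->],
    (Qconj_sign n z) as [-> | ->];
    rewrite ?associates_negl, ?associates_negm, ?associates_negr; reflexivity.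
Qed.

Lemma associates_conj_rev n (x y z : Q n) :
  associates n x y z <-> associates n (Qconj n z) (Qconj n y) (Qconj n x).
Proof.
  unfold associates.
  transitivity (Qconj n (Qmul n (Qmul n x y) z) = Qconj n (Qmul n x (Qmul n y z))).
  - split; [congruence | apply Qconj_inj].
  - rewrite !Qconj_mul; split; intro; symmetry; assumption.
Qed.

Lemma associates_rev n (x y z : Q n) : associates n x y z <-> associates n z y x.
Proof. now rewrite associates_conj_rev, associates_conj. Qed.

Theorem mainTheorem2 (n : nat) (x y z : Q n) :
  Qassoc n x y z = Qassoc n z y x.
Proof.
  unfold Qassoc.
  replace (Qeqb n (Qmul n (Qmul n z y) x) (Qmul n z (Qmul n y x)))
    with (Qeqb n (Qmul n (Qmul n x y) z) (Qmul n x (Qmul n y z))); [reflexivity|].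
  apply eq_true_iff_eq.
  rewrite !Qeqb_spec.
  apply associates_rev.
Qed.
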